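(* Let $\mathscr G=(\mathscr V,\mathscr E)$ be a finite connected graph with $N$ vertices and $M\ge0$ an integer. The immediate exchange model $(Y_t)$ on $\mathscr C_{N,M}$ has a unique stationary distribution $\pi_Y$, and $$\lim_{t\to\infty}P_\eta(Y_t=\xi)=\pi_Y(\xi)\quad\text{for all }\xi,\eta\in\mathscr C_{N,M},$$ where $P_\eta$ denotes the law of the process started from $Y_0=\eta$.
   Context: $\mathscr C_{N,M}$ is the set of maps $\xi:\mathscr V\to\mathbb N$ with $\sum_x\xi(x)=M$. The immediate exchange model is the discrete-time Markov chain on $\mathscr C_{N,M}$: at each step an edge $(x,y)\in\mathscr E$ is chosen uniformly at random, independent $U_1$ uniform on $\{0,\dots,Y_t(x)\}$ and $U_2$ uniform on $\{0,\dots,Y_t(y)\}$ are drawn, and $Y_{t+1}(x)=Y_t(x)-U_1+U_2$, $Y_{t+1}(y)=Y_t(y)-U_2+U_1$, $Y_{t+1}(z)=Y_t(z)$ for $z\notin\{x,y\}$. *)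

From HB Require Import structures.
From mathcomp Require Import all_boot all_order all_algebra.
From mathcomp Require Import all_classical all_reals all_analysis.
Set Implicit Arguments. Unset Strict Implicit. Unset Printing Implicit Defensive.
Import Order.TTheory GRing.Theory Num.Theory.
Local Open Scope ring_scope.

(* C_{N,M}: maps xi : V -> nat with \sum_x xi x = M.  Every value is <= M,
   so we store them in 'I_M.+1 to obtain a finite type. *)
Definition conf (V : finType) (M : nat) : finType :=
  {f : {ffun V -> 'I_M.+1} | (\sum_(x : V) (f x : nat))%N == M}.

Definition cval (V : finType) (M : nat) (xi : conf V M) (x : V) : nat :=
  (val xi) x.

Definition edges (V : finType) (e : rel V) : {set V * V} :=
  [set p : V * V | e p.1 p.2].

Definition ie_step (V : finType) (M : nat) (eta xi : conf V M) (x y : V)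
    (u1 u2 : nat) : bool :=
  [forall z : V, cval xi z ==
     (if z == x then (cval eta x - u1 + u2)%N
      else if z == y then (cval eta y - u2 + u1)%N
      else cval eta z)].

(* one-step transition kernel: edge uniform in edges e, U1 uniform on
   {0..eta x}, U2 uniform on {0..eta y}, independent *)
Definition ie_kernel (R : realType) (V : finType) (e : rel V) (M : nat)
    (eta xi : conf V M) : R :=
  \sum_(p in edges e)
    \sum_(u1 < (cval eta p.1).+1) \sum_(u2 < (cval eta p.2).+1)
      (#|edges e|%:R^-1 * ((cval eta p.1).+1%:R)^-1 * ((cval eta p.2).+1%:R)^-1
        * (ie_step eta xi p.1 p.2 u1 u2)%:R).

Fixpoint ie_law (R : realType) (V : finType) (e : rel V) (M : nat)
    (t : nat) (eta xi : conf V M) : R :=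
  match t with
  | 0%N => (eta == xi)%:R
  | t'.+1 => \sum_(zeta : conf V M) @ie_law R V e M t' eta zeta * ie_kernel R e zeta xi
  end.

Definition ie_stationary (R : realType) (V : finType) (e : rel V) (M : nat)
    (pi : conf V M -> R) : Prop :=
  (forall xi, 0 <= pi xi) /\ \sum_(xi : conf V M) pi xi = 1 /\
  (forall xi, \sum_(eta : conf V M) pi eta * ie_kernel R e eta xi = pi xi).

(** The chain is lazy, as [U1 = U2 = 0] leaves the configuration unchanged,
    and from any configuration it can gather all [M] units at a fixed vertex
    [v0] by emptying vertices one after the other into their successor along
    a path to [v0].  Hence the configuration concentrated at [v0] is reached
    with positive probability from every state at one common time [T].
    Doeblin's coupling bound then shrinks the oscillation over starting states
    of [P_a(Y_t = xi)] by a factor [1 - d] every [T] steps, so the laws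
    converge, uniformly in the starting state, to a common limit.  The limit
    is stationary, and any stationary [pi = pi P^t] must equal it. *)

From mathcomp Require Import all_boot all_order all_algebra.
From mathcomp Require Import all_classical all_reals all_analysis.
From mathcomp Require Import ring lra zify.
Import Order.TTheory GRing.Theory Num.Theory.
Import numFieldNormedType.Exports.
Local Open Scope classical_set_scope.
Local Open Scope ring_scope.

Set Implicit Arguments.
Unset Strict Implicit.

Section Averages.
Variables (R : realFieldType) (S : finType).
Implicit Types (p q f : S -> R).

Lemma sum_delta_mull (a : S) (F : S -> R) : \sum_z (z == a)%:R * F z = F a.
Proof.
by rewrite (bigD1 a) //= eqxx mul1r big1 ?addr0 // => z /negbTE ->; rewrite mul0r.
Qed.

Lemma psumr_gt0 (I : finType) (P : pred I) (F : I -> R) i :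
  P i -> (forall j, P j -> 0 <= F j) -> 0 < F i -> 0 < \sum_(j | P j) F j.
Proof.
move=> Pi F_ge0 Fi_gt0; rewrite (bigD1 i) //=; apply: (lt_le_trans Fi_gt0).
by rewrite lerDl sumr_ge0 // => j /andP[/F_ge0].
Qed.

Lemma sum_ord_mulV n (x : R) : \sum_(u < n.+1) x * n.+1%:R^-1 = x.
Proof. by rewrite sumr_const card_ord -[_ / _ *+ _]mulr_natr -mulrA mulVf ?mulr1. Qed.

Lemma dist_avg_le p f (v c : R) :
  (forall z, 0 <= p z) -> \sum_z p z = 1 ->
  (forall z, `|v - f z| <= c) -> `|v - \sum_z p z * f z| <= c.
Proof.
move=> p_ge0 p_sum1 f_near.
have -> : v - \sum_z p z * f z = \sum_z p z * (v - f z).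
  rewrite -[v in LHS]mul1r -p_sum1 mulr_suml -sumrB.
  by apply: eq_bigr => z _; rewrite mulrBr.
apply: le_trans (ler_norm_sum _ _ _) _.
rewrite -[c]mul1r -p_sum1 mulr_suml; apply: ler_sum => z _.
by rewrite normrM ger0_norm // ler_wpM2l.
Qed.

Lemma dist_sums_le (a b f : S -> R) (s c : R) :
  (forall z, 0 <= a z) -> (forall z, 0 <= b z) ->
  \sum_z a z = s -> \sum_z b z = s -> (forall z w, `|f z - f w| <= c) ->
  `|\sum_z a z * f z - \sum_z b z * f z| <= s * c.
Proof.
move=> a_ge0 b_ge0 a_sum b_sum f_osc.
have [s0 | s_neq0] := eqVneq s 0.
  have a0 z : a z = 0 by apply: (psumr_eq0P (P := xpredT)); rewrite ?a_sum.
  have b0 z : b z = 0 by apply: (psumr_eq0P (P := xpredT)); rewrite ?b_sum.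
  rewrite !big1 => [|z _|z _]; rewrite ?a0 ?b0 ?mul0r //.
  by rewrite subrr normr0 s0 mul0r.
have s_gt0 : 0 < s by rewrite lt0r s_neq0 -a_sum sumr_ge0.
have coupling : s * (\sum_z a z * f z - \sum_z b z * f z) =
    \sum_z \sum_w a z * b w * (f z - f w).
  have -> : \sum_z \sum_w a z * b w * (f z - f w) =
      \sum_z (a z * f z * \sum_w b w - a z * \sum_w b w * f w).
    apply: eq_bigr => z _; rewrite !mulr_sumr -sumrB.
    by apply: eq_bigr => w _; ring.
  by rewrite sumrB -!mulr_suml a_sum b_sum; ring.
rewrite -(ler_pM2l s_gt0) -{1}(gtr0_norm s_gt0) -normrM coupling.
apply: le_trans (ler_norm_sum _ _ _) _.
apply: le_trans (_ : _ <= \sum_z \sum_w a z * b w * c) _.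
  apply: ler_sum => z _; apply: le_trans (ler_norm_sum _ _ _) _.
  apply: ler_sum => w _.
  by rewrite normrM ger0_norm ?mulr_ge0 // ler_wpM2l ?mulr_ge0.
under eq_bigr do rewrite -mulr_suml -mulr_sumr b_sum.
by rewrite -!mulr_suml a_sum mulrA.
Qed.

Lemma doeblin_contraction p q f z0 (d c : R) :
  (forall z, 0 <= p z) -> (forall z, 0 <= q z) ->
  \sum_z p z = 1 -> \sum_z q z = 1 -> d <= p z0 -> d <= q z0 ->
  (forall z w, `|f z - f w| <= c) ->
  `|\sum_z p z * f z - \sum_z q z * f z| <= (1 - d) * c.
Proof.
move=> p_ge0 q_ge0 p_sum1 q_sum1 d_le_p d_le_q f_osc.
(* The mass [d] that both laws put on [z0] cancels in the difference. *)
pose cut r z := r z - (z == z0)%:R * d.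
have cut_ge0 r : (forall z, 0 <= r z) -> d <= r z0 -> forall z, 0 <= cut r z.
  move=> r_ge0 d_le_r z; rewrite /cut.
  by case: eqP => [->|_]; rewrite ?mul1r ?mul0r ?subr0 ?subr_ge0.
have cut_sum r : \sum_z r z = 1 -> \sum_z cut r z = 1 - d.
  by move=> r_sum1; rewrite sumrB r_sum1 sum_delta_mull.
have sum_cut r : \sum_z r z * f z = \sum_z cut r z * f z + d * f z0.
  under [X in _ = X + _]eq_bigr do rewrite mulrBl -mulrA.
  by rewrite sumrB sum_delta_mull subrK.
rewrite (sum_cut p) (sum_cut q) opprD addrACA subrr addr0.
exact: dist_sums_le (cut_ge0 _ p_ge0 d_le_p) (cut_ge0 _ q_ge0 d_le_q)
  (cut_sum _ p_sum1) (cut_sum _ q_sum1) f_osc.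
Qed.

End Averages.

Section Chain.
Variables (R : realFieldType) (S : finType) (K : S -> S -> R).

Definition stationary (pi : S -> R) : Prop :=
  (forall xi, 0 <= pi xi) /\ \sum_xi pi xi = 1 /\
  (forall xi, \sum_eta pi eta * K eta xi = pi xi).

Fixpoint nstep (t : nat) (a b : S) : R :=
  match t with
  | 0%N => (a == b)%:R
  | t'.+1 => \sum_z nstep t' a z * K z b
  end.

Definition reachable (a b : S) : Prop := exists k, 0 < nstep k a b.

Lemma nstepD k l a c : nstep (k + l) a c = \sum_b nstep k a b * nstep l b c.
Proof.
elim: l c => [|l IHl] c /=.
  by rewrite addn0; under eq_bigr do rewrite mulrC; rewrite sum_delta_mull.
rewrite addnS /=; under eq_bigr do rewrite IHl mulr_suml.
rewrite exchange_big /=; apply: eq_bigr => b _.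
by rewrite mulr_sumr; apply: eq_bigr => z _; rewrite mulrA.
Qed.

Lemma nstep1 a b : nstep 1 a b = K a b.
Proof. by rewrite /=; under eq_bigr do rewrite eq_sym; rewrite sum_delta_mull. Qed.

Lemma stationary_nstep pi t xi :
  stationary pi -> \sum_eta pi eta * nstep t eta xi = pi xi.
Proof.
move=> [_ [_ pi_inv]]; elim: t xi => [|t IHt] xi /=.
  by under eq_bigr do rewrite mulrC; rewrite sum_delta_mull.
rewrite -pi_inv; under eq_bigr do rewrite mulr_sumr.
rewrite exchange_big /=; apply: eq_bigr => z _.
by rewrite -IHt mulr_suml; apply: eq_bigr => eta _; rewrite mulrA.
Qed.

Hypothesis K_ge0 : forall a b, 0 <= K a b.
Hypothesis K_sum1 : forall a, \sum_b K a b = 1.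

Lemma nstep_ge0 t a b : 0 <= nstep t a b.
Proof.
elim: t b => [|t IHt] b /=; first exact: ler0n.
by apply: sumr_ge0 => z _; apply: mulr_ge0.
Qed.

Lemma nstep_sum1 t a : \sum_b nstep t a b = 1.
Proof.
elim: t => [|t IHt] /=.
  by under eq_bigr do rewrite -[_%:R]mulr1 eq_sym; rewrite sum_delta_mull.
rewrite exchange_big /= -IHt; apply: eq_bigr => z _.
by rewrite -mulr_sumr K_sum1 mulr1.
Qed.

Lemma nstepD_gt0 k l a b c :
  0 < nstep k a b -> 0 < nstep l b c -> 0 < nstep (k + l) a c.
Proof.
move=> ab_gt0 bc_gt0; rewrite nstepD (@psumr_gt0 _ _ xpredT _ b) ?mulr_gt0 //.
by move=> z _; rewrite mulr_ge0 ?nstep_ge0.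
Qed.

Lemma reachable_refl a : reachable a a.
Proof. by exists 0%N; rewrite /= eqxx ltr01. Qed.

Lemma reachable_step a b : 0 < K a b -> reachable a b.
Proof. by exists 1%N; rewrite nstep1. Qed.

Lemma reachable_trans a b c : reachable a b -> reachable b c -> reachable a c.
Proof.
by move=> [k ab_gt0] [l bc_gt0]; exists (k + l)%N; exact: nstepD_gt0 ab_gt0 bc_gt0.
Qed.

Lemma nstep_diag_gt0 b t : 0 < K b b -> 0 < nstep t b b.
Proof.
move=> Kbb_gt0; elim: t => [|t IHt]; first by rewrite /= eqxx ltr01.
by rewrite -addn1; apply: nstepD_gt0 IHt _; rewrite nstep1.
Qed.

Lemma uniform_hitting_time z0 :
  0 < K z0 z0 -> (forall a, reachable a z0) -> exists T, forall a, 0 < nstep T a z0.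
Proof.
move=> Kz0_gt0 to_z0; pose k a := xchoose (to_z0 a).
exists (\max_a k a)%N => a; rewrite -(subnKC (leq_bigmax a)).
exact: nstepD_gt0 (xchooseP (to_z0 a)) (nstep_diag_gt0 _ Kz0_gt0).
Qed.

Lemma dist_nstep_le m n a xi (v c : R) : (m <= n)%N ->
  (forall z, `|v - nstep m z xi| <= c) -> `|v - nstep n a xi| <= c.
Proof.
move=> le_mn near_m; rewrite -(subnK le_mn) nstepD.
by apply: dist_avg_le near_m => [z|]; rewrite ?nstep_ge0 ?nstep_sum1.
Qed.

Lemma nstep_osc_geometric z0 T : (forall a, 0 < nstep T a z0) ->
  exists2 rho : R, 0 <= rho < 1 &
    forall k a b xi, `|nstep (k * T) a xi - nstep (k * T) b xi| <= rho ^+ k.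
Proof.
move=> hit_z0; pose d := \big[Num.min/1]_a nstep T a z0.
have d_le a : d <= nstep T a z0 by rewrite /d (bigD1 a) //= ge_min lexx.
have d_gt0 : 0 < d.
  by apply: (big_ind (fun x => 0 < x)) => // x y; rewrite lt_min => -> ->.
have d_le1 : d <= 1.
  by apply: (big_rec (fun x => x <= 1)) => // a x _ x_le1; rewrite ge_min x_le1 orbT.
exists (1 - d); first by apply/andP; split; lra.
elim=> [|k IHk] a b xi.
  rewrite mul0n expr0 /=.
  by do 2 case: eqP; rewrite ?subrr ?subr0 ?sub0r ?normrN ?normr0 ?normr1.
rewrite mulSn exprS !nstepD.
apply: doeblin_contraction (d_le a) (d_le b) (fun z w => IHk z w xi) => [z|z||];
  by rewrite ?nstep_ge0 ?nstep_sum1.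
Qed.

End Chain.

Lemma cvg_sum (R : realType) (I : finType) (u : I -> nat -> R) (l : I -> R) :
  (forall i, u i @ \oo --> l i) -> (fun t => \sum_i u i t) @ \oo --> \sum_i l i.
Proof. by move=> u_cvg; apply: (cvg_big (P := xpredT) add_continuous). Qed.

Lemma dist_lim_le (R : realType) (u : nat -> R) (l v c : R) :
  u @ \oo --> l -> (\forall t \near \oo, `|v - u t| <= c) -> `|v - l| <= c.
Proof. by move=> u_cvg; apply: cvgr_to_le; exact: cvg_norm (cvgB (cvg_cst v) u_cvg). Qed.

Section Convergence.
Variables (R : realType) (S : finType) (K : S -> S -> R).
Hypothesis K_ge0 : forall a b, 0 <= K a b.
Hypothesis K_sum1 : forall a, \sum_b K a b = 1.
Variables (z0 : S) (T : nat).
Hypothesis hit_z0 : forall a, 0 < nstep K T a z0.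

Lemma nstep_mixing (eps : R) : 0 < eps ->
  exists m, forall n a b xi, (m <= n)%N -> `|nstep K m b xi - nstep K n a xi| < eps.
Proof.
move=> eps_gt0.
have [rho /andP[rho_ge0 rho_lt1] osc] := nstep_osc_geometric K_ge0 K_sum1 hit_z0.
have [k rhok_lt] : exists k, rho ^+ k < eps.
  have rho_norm_lt1 : `|rho| < 1 by rewrite ger0_norm.
  have /cvgrPdist_lt/(_ eps eps_gt0)[k _ near_k] := cvg_expr rho_norm_lt1.
  exists k; have := near_k k (leqnn k).
  by rewrite sub0r normrN ger0_norm ?exprn_ge0.
exists (k * T)%N => n a b xi le_kT_n; apply: le_lt_trans _ rhok_lt.
by apply: (dist_nstep_le K_ge0 K_sum1 a le_kT_n) => z; apply: osc.
Qed.

Definition limit_law (xi : S) : R := lim (nstep K t z0 xi @[t --> \oo]).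

Lemma cvg_nstep_limit_law eta xi : nstep K t eta xi @[t --> \oo] --> limit_law xi.
Proof.
have z0_cvg : cvg (nstep K t z0 xi @[t --> \oo]).
  apply/cauchy_cvgP/cauchy_exP => eps eps_gt0.
  have [m mix] := nstep_mixing eps_gt0.
  exists (nstep K m z0 xi), m => // n /= le_mn.
  by rewrite -ball_normE /=; apply: mix.
apply/cvgrPdist_le => eps eps_gt0.
have [m mix] := nstep_mixing (divr_gt0 eps_gt0 (ltr0Sn R 1)).
exists m => // n /= le_mn.
have lim_near : `|nstep K m z0 xi - limit_law xi| <= eps / 2.
  apply: dist_lim_le z0_cvg _; exists m => // t /= le_mt; exact/ltW/mix.
rewrite [eps]splitr; apply: le_trans (ler_distD (nstep K m z0 xi) _ _) _.
by rewrite distrC lerD // ltW ?mix.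
Qed.

Lemma limit_law_stationary : stationary K limit_law.
Proof.
have lim_z0 := cvg_nstep_limit_law z0.
split; [|split].
- move=> xi; apply: cvgr_to_ge (lim_z0 xi) _.
  by apply: nearW => t; apply: nstep_ge0.
- have : (fun t => \sum_xi nstep K t z0 xi) @ \oo --> \sum_xi limit_law xi.
    exact: cvg_sum.
  have -> : (fun t => \sum_xi nstep K t z0 xi) = fun=> 1.
    by apply/funext => t; apply: nstep_sum1.
  by move=> lim_1; exact: (cvg_unique (@Rhausdorff R) lim_1 (cvg_cst (1 : R))).
- move=> xi; have := lim_z0 xi; rewrite -cvg_shiftS.
  move=> lim_xi; apply: (cvg_unique (@Rhausdorff R) _ lim_xi).
  by apply: cvg_sum => eta; apply: cvgMr_tmp.
Qed.

Lemma stationary_eq_limit_law pi : stationary K pi -> pi = limit_law.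
Proof.
move=> pi_stat; apply/funext => xi; have [_ [pi_sum1 _]] := pi_stat.
have : (fun t => \sum_eta pi eta * nstep K t eta xi) @ \oo -->
    \sum_eta pi eta * limit_law xi.
  by apply: cvg_sum => eta; apply: cvgMl_tmp; apply: cvg_nstep_limit_law.
have -> : (fun t => \sum_eta pi eta * nstep K t eta xi) = fun=> pi xi.
  by apply/funext => t; apply: stationary_nstep.
rewrite -mulr_suml pi_sum1 mul1r => lim_pi.
exact: (cvg_unique (@Rhausdorff R) (cvg_cst (pi xi)) lim_pi).
Qed.

End Convergence.

Section Configurations.
Variables (V : finType) (M : nat).
Implicit Types (eta xi : conf V M).

Lemma conf_sum eta : (\sum_z cval eta z)%N = M.
Proof. exact: eqP (valP eta). Qed.

Lemma cval_le eta z : (cval eta z <= M)%N.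
Proof. by rewrite -ltnS; apply: ltn_ord. Qed.

Lemma cval_inj eta xi : cval eta =1 cval xi -> eta = xi.
Proof. by move=> eq_cval; apply/val_inj/ffunP => z; apply/val_inj/eq_cval. Qed.

Lemma conf_of (g : V -> nat) : (\sum_z g z)%N = M -> {xi : conf V M | cval xi =1 g}.
Proof.
move=> g_sum.
have g_lt z : (g z < M.+1)%N by rewrite ltnS -g_sum (bigD1 z) //= leq_addr.
have f_sum : (\sum_z ([ffun z => inord (g z)] : {ffun V -> 'I_M.+1}) z)%N == M.
  by rewrite -[in X in _ == X]g_sum; apply/eqP/eq_bigr => z _; rewrite ffunE inordK.
by exists (exist _ [ffun z => inord (g z)] f_sum) => z; rewrite /cval /= ffunE inordK.
Qed.

Lemma conf_point_exists v0 : exists xi, cval xi v0 = M.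
Proof.
pose g z := if z == v0 then M else 0%N.
have g_sum : (\sum_z g z)%N = M.
  by rewrite (bigD1 v0) //= /g eqxx big1 ?addn0 // => z /negbTE ->.
by have [xi xi_g] := conf_of g_sum; exists xi; rewrite xi_g /g eqxx.
Qed.

Lemma cval_point eta v0 :
  (cval eta v0 == M) = [forall z, (z != v0) ==> (cval eta z == 0%N)].
Proof.
have := conf_sum eta; rewrite (bigD1 v0) //= => sum_eta.
by rewrite -sum_nat_eq0; apply/eqP/eqP; lia.
Qed.

Lemma conf_point_unique eta xi v0 : cval eta v0 = M -> cval xi v0 = M -> eta = xi.
Proof.
move=> eta_v0 xi_v0; apply: cval_inj => z.
have [-> | z_neq_v0] := eqVneq z v0; first by rewrite eta_v0 xi_v0.
have off_v0 (zeta : conf V M) : cval zeta v0 = M -> cval zeta z = 0%N.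
  by move/eqP; rewrite cval_point => /forallP/(_ z); rewrite z_neq_v0 => /eqP.
by rewrite !off_v0.
Qed.

Definition exchange eta (x y : V) (u1 u2 : nat) (z : V) : nat :=
  if z == x then (cval eta x - u1 + u2)%N
  else if z == y then (cval eta y - u2 + u1)%N else cval eta z.

Lemma exchange_sum eta x y u1 u2 : x != y ->
  (u1 <= cval eta x)%N -> (u2 <= cval eta y)%N ->
  (\sum_z exchange eta x y u1 u2 z)%N = M.
Proof.
move=> x_neq_y le_u1 le_u2; rewrite -(conf_sum eta).
have y_neq_x : y != x by rewrite eq_sym.
have split_xy (f : V -> nat) :
    (\sum_z f z = f x + f y + \sum_(z | (z != x) && (z != y)) f z)%N.
  by rewrite (bigD1 x) //= (bigD1 y) //= addnA.
rewrite !split_xy /exchange eqxx (negbTE y_neq_x) eqxx.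
rewrite (eq_bigr (cval eta)) => [|z /andP[/negbTE-> /negbTE->] //]; lia.
Qed.

Lemma ie_step_cval eta xi x y u1 u2 :
  ie_step eta xi x y u1 u2 -> cval xi =1 exchange eta x y u1 u2.
Proof. by move=> /forallP step z; apply/eqP/step. Qed.

Lemma ie_step_exists eta x y u1 u2 : x != y ->
  (u1 <= cval eta x)%N -> (u2 <= cval eta y)%N -> exists xi, ie_step eta xi x y u1 u2.
Proof.
move=> x_neq_y le_u1 le_u2.
have [xi xi_cval] := conf_of (exchange_sum x_neq_y le_u1 le_u2).
by exists xi; apply/forallP => z; rewrite xi_cval.
Qed.

Lemma ie_step_unique eta xi xi' x y u1 u2 :
  ie_step eta xi x y u1 u2 -> ie_step eta xi' x y u1 u2 -> xi = xi'.
Proof.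
move=> /ie_step_cval step /ie_step_cval step'.
by apply: cval_inj => z; rewrite step step'.
Qed.

End Configurations.

Section Kernel.
Variables (R : realType) (V : finType) (e : rel V) (M : nat).
Local Notation K := (@ie_kernel R V e M).

Lemma ie_lawE t : @ie_law R V e M t =2 nstep K t.
Proof. by elim: t => //= t IHt eta xi; apply: eq_bigr => zeta _; rewrite IHt. Qed.

Lemma ie_kernel_ge0 eta xi : 0 <= K eta xi.
Proof.
do 3 (apply: sumr_ge0 => ? _).
by rewrite !mulr_ge0 ?invr_ge0 ?ler0n.
Qed.

Lemma ie_kernel_gt0 eta xi p u1 u2 : p \in edges e ->
  (u1 <= cval eta p.1)%N -> (u2 <= cval eta p.2)%N ->
  ie_step eta xi p.1 p.2 u1 u2 -> 0 < K eta xi.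
Proof.
move=> p_edge le_u1 le_u2 step.
have lt_u1 : (u1 < (cval eta p.1).+1)%N := le_u1.
have lt_u2 : (u2 < (cval eta p.2).+1)%N := le_u2.
have edges_gt0 : (0 < #|edges e|)%N by apply/card_gt0P; exists p.
have summand_ge0 q v1 v2 : 0 <= #|edges e|%:R^-1 * (cval eta q.1).+1%:R^-1 *
    (cval eta q.2).+1%:R^-1 * (ie_step eta xi q.1 q.2 v1 v2)%:R :> R.
  by rewrite !mulr_ge0 ?invr_ge0 ?ler0n.
apply: (psumr_gt0 p_edge) => [q _|]; first by do 2 (apply: sumr_ge0 => ? _).
apply: (psumr_gt0 (i := Ordinal lt_u1)) => // [v1 _|]; first exact: sumr_ge0.
apply: (psumr_gt0 (i := Ordinal lt_u2)) => //=.
by rewrite step mulr1 !mulr_gt0 // invr_gt0 ltr0n.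
Qed.

Hypothesis e_irr : irreflexive e.

Lemma edges_neq p : p \in edges e -> p.1 != p.2.
Proof. by rewrite inE; apply: contraTN => /eqP->; rewrite e_irr. Qed.

Lemma sum_ie_step eta p u1 u2 : p \in edges e ->
  (u1 <= cval eta p.1)%N -> (u2 <= cval eta p.2)%N ->
  \sum_(xi : conf V M) ((ie_step eta xi p.1 p.2 u1 u2)%:R : R) = 1.
Proof.
move=> p_edge le_u1 le_u2.
have [xi step] := ie_step_exists (edges_neq p_edge) le_u1 le_u2.
rewrite (bigD1 xi) //= step big1 ?addr0 // => xi' xi'_neq.
case step' : (ie_step eta xi' p.1 p.2 u1 u2) => //.
by rewrite (ie_step_unique step step') eqxx in xi'_neq.
Qed.

Lemma ie_kernel_sum1 eta : (0 < #|edges e|)%N -> \sum_(xi : conf V M) K eta xi = 1.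
Proof.
move=> edges_gt0; rewrite exchange_big /=.
transitivity (\sum_(p in edges e) (#|edges e|%:R : R)^-1); last first.
  by rewrite sumr_const -[_ *+ _]mulr_natr mulVf // pnatr_eq0 -lt0n.
apply: eq_bigr => p p_edge; rewrite exchange_big /=.
rewrite -[RHS](sum_ord_mulV (cval eta p.1)); apply: eq_bigr => u1 _.
rewrite exchange_big /= -[RHS](sum_ord_mulV (cval eta p.2)).
apply: eq_bigr => u2 _.
by rewrite -mulr_sumr sum_ie_step ?mulr1 // -ltnS.
Qed.

End Kernel.

Section Irreducibility.
Variables (R : realType) (V : finType) (e : rel V) (M : nat).
Hypothesis e_irr : irreflexive e.
Local Notation K := (@ie_kernel R V e M).

Lemma ie_kernel_diag_gt0 eta : (0 < #|edges e|)%N -> 0 < K eta eta.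
Proof.
move=> /card_gt0P[p p_edge].
apply: (ie_kernel_gt0 R (u1 := 0%N) (u2 := 0%N) p_edge) => //.
apply/forallP => z; rewrite !subn0 !addn0.
by case: ifP => [/eqP->|_]; last case: ifP => [/eqP->|_].
Qed.

Lemma ie_kernel_transfer eta x y : e x y -> exists xi,
  [/\ 0 < K eta xi, cval xi y = (cval eta y + cval eta x)%N &
      forall z, z != x -> z != y -> cval xi z = cval eta z].
Proof.
move=> xy_edge; have xy_in : (x, y) \in edges e by rewrite inE.
have [xi step] := ie_step_exists (edges_neq e_irr xy_in) (leqnn (cval eta x)) (leq0n _).
exists xi; split; first exact: (ie_kernel_gt0 R xy_in (leqnn _) (leq0n _) step).
  by rewrite (ie_step_cval step) /exchange eq_sym (negbTE (edges_neq e_irr xy_in))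
    eqxx subn0 addnC.
move=> z /negbTE z_neq_x /negbTE z_neq_y.
by rewrite (ie_step_cval step) /exchange z_neq_x z_neq_y.
Qed.

Lemma reachable_gather_path v0 p x eta : x != v0 -> path e x p -> last x p = v0 ->
  exists2 eta', reachable K eta eta' & (cval eta v0 + cval eta x <= cval eta' v0)%N.
Proof.
elim: p x eta => [|y p IHp] x eta x_neq_v0 /=.
  by move=> _ x_v0; rewrite x_v0 eqxx in x_neq_v0.
move=> /andP[xy_edge y_path] y_last.
have [xi [eta_xi xi_y xi_other]] := ie_kernel_transfer eta xy_edge.
have v0_neq_x : v0 != x by rewrite eq_sym.
have [y_v0 | y_neq_v0] := eqVneq y v0.
  by exists xi; [apply: reachable_step | rewrite -y_v0 xi_y].
have [eta' xi_eta' gain] := IHp y xi y_neq_v0 y_path y_last.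
exists eta'.
  exact: (reachable_trans (@ie_kernel_ge0 R V e M) (reachable_step eta_xi) xi_eta').
have xi_v0 : cval xi v0 = cval eta v0 by rewrite xi_other // eq_sym.
by move: gain; rewrite xi_y xi_v0; lia.
Qed.

Hypothesis e_conn : forall x y : V, connect e x y.

Lemma edges_nonempty : (1 < #|V|)%N -> (0 < #|edges e|)%N.
Proof.
move=> /card_gt1P[x [y [_ _ x_neq_y]]].
have /connectP[[|z p] /= xp_path y_last] := e_conn x y.
  by rewrite y_last eqxx in x_neq_y.
by apply/card_gt0P; exists (x, z); rewrite inE; case/andP: xp_path.
Qed.

Lemma reachable_point v0 xi0 eta : cval xi0 v0 = M -> reachable K eta xi0.
Proof.
move=> xi0_v0; have [n] := ubnP (M - cval eta v0); elim: n eta => // n IHn eta.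
rewrite ltnS => le_n.
have [/conf_point_unique/(_ xi0_v0)-> | not_full] := eqVneq (cval eta v0) M.
  exact: reachable_refl.
have /forallPn[x] : ~~ [forall z, (z != v0) ==> (cval eta z == 0%N)].
  by rewrite -cval_point.
rewrite negb_imply => /andP[x_neq_v0 x_pos].
have /connectP[p x_path v0_last] := e_conn x v0.
have [eta' eta_eta' gain] := reachable_gather_path eta x_neq_v0 x_path (esym v0_last).
apply: (reachable_trans (@ie_kernel_ge0 R V e M) eta_eta' (IHn _ _)).
by have := cval_le eta' v0; have := cval_le eta v0; lia.
Qed.

End Irreducibility.

Theorem lemma3 (R : realType) (V : finType) (e : rel V) (M : nat)
    (e_sym : symmetric e) (e_irr : irreflexive e)
    (e_conn : forall x y : V, connect e x y) (hN : (1 < #|V|)%N) :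
  exists pi : conf V M -> R,
    ie_stationary e pi /\
    (forall pi' : conf V M -> R, ie_stationary e pi' -> pi' = pi) /\
    (forall eta xi : conf V M, (fun t => ie_law R e t eta xi) @ \oo --> pi xi).
Proof.
have [v0 _] := card_gt1P hN.
have [xi0 xi0_v0] := conf_point_exists M v0.
have edges_gt0 := edges_nonempty e_conn hN.
have K_ge0 := @ie_kernel_ge0 R V e M.
have K_sum1 (eta : conf V M) := ie_kernel_sum1 R e_irr eta edges_gt0.
have [T hit_xi0] := uniform_hitting_time K_ge0 (ie_kernel_diag_gt0 R xi0 edges_gt0)
  (fun eta => reachable_point R e_irr e_conn eta xi0_v0).
exists (limit_law (@ie_kernel R V e M) xi0); split; [|split].
- exact: (limit_law_stationary K_ge0 K_sum1 hit_xi0).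
- by move=> pi /(stationary_eq_limit_law K_ge0 K_sum1 hit_xi0).
- move=> eta xi; under eq_fun do rewrite ie_lawE.
  exact: (cvg_nstep_limit_law K_ge0 K_sum1 hit_xi0 eta).
Qed.
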